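(* Let $k$ be a field and $G$ a finite group of order $n$ with $1/n\in k$, and assume $k$ contains the $n$-th roots of unity. Let $l$ be a field (not necessarily of the same characteristic) which contains the $n$-th roots of unity and with $1/n\in l$, and fix an isomorphism $\epsilon$ between the groups of $n$-th roots of unity in $k$ and in $l$. Let $\sigma\subseteq G$ be a cyclic subgroup. Then the $l$-algebra homomorphism $R(\sigma)_l\to\mathrm{Map}(\sigma,l)$ sending the class of an irreducible $\sigma$-representation $V$ to $\epsilon\circ\chi_V$ is an isomorphism, and it restricts to an isomorphism of $l$-algebras $$\widetilde{R}(\sigma)_l\xrightarrow{\ \simeq\ }\mathrm{Map}(\mathrm{gen}(\sigma),l),$$ where $\mathrm{Map}(\mathrm{gen}(\sigma),l)$ is identified with the functions on $\sigma$ vanishing outside $\mathrm{gen}(\sigma)$. These isomorphisms are compatible with the actions of $\mathrm{Aut}(\sigma)$.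
   Context: $R(\sigma)$ is the representation ring over $k$; $R(\sigma)_l:=R(\sigma)\otimes_{\mathbb{Z}}l$; $\chi_V$ is the character of $V$ (for irreducible $V$ it is a homomorphism $\sigma\to\mu_n(k)$). $\mathrm{gen}(\sigma)$ is the set of generators of $\sigma$ and $\mathrm{Map}(S,l)$ the $l$-algebra of functions $S\to l$. For a finite cyclic group $\rho$, $e_{\mathrm{prim}}:=\prod_{\rho'}(1-\frac1{|\rho'|}\sum_{h\in\rho'}h)\in\mathbb{Z}[1/n][\rho]$ over minimal nontrivial subgroups $\rho'$; $e_\sigma\in R(\sigma)_{1/n}$ is the idempotent corresponding to $e_{\mathrm{prim}}\in\mathbb{Z}[1/n][\sigma^\vee]$, $\sigma^\vee=\mathrm{Hom}(\sigma,k^\times)$, under the character isomorphism $R(\sigma)\simeq\mathbb{Z}[\sigma^\vee]$; $\widetilde{R}(\sigma)_l:=e_\sigma R(\sigma)_l$. $\mathrm{Aut}(\sigma)$ acts on $R(\sigma)_l$, on $\widetilde{R}(\sigma)_l$, and on functions on $\sigma$ by transport of structure. *)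

From HB Require Import structures.
From mathcomp Require Import all_boot all_order all_algebra all_fingroup all_solvable.
From mathcomp Require Import finmap.
From mathcomp Require Import boolp classical_sets functions cardinality fsbigop.
Set Implicit Arguments. Unset Strict Implicit. Unset Printing Implicit Defensive.
Import Order.TTheory GRing.Theory.
Local Open Scope classical_set_scope.
Local Open Scope ring_scope.

Section RepRing.
Variables (gT : finGroupType) (k l : fieldType).
Implicit Types (s : {set gT}) (chi psi : {ffun gT -> k}).

Definition is_kchar s chi : Prop :=
  [/\ forall x y, x \in s -> y \in s -> chi (x * y)%g = chi x * chi y,
      forall x, x \in s -> chi x != 0
    & forall x, x \notin s -> chi x = 0].

Definition kchars s : set {ffun gT -> k} := is_kchar s.

Definition chi1 s : {ffun gT -> k} := [ffun x => if x \in s then 1 else 0].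
Definition cmul chi psi : {ffun gT -> k} := [ffun x => chi x * psi x].
Definition cinv chi : {ffun gT -> k} := [ffun x => (chi x)^-1].

(* R(sigma)_l = l[sigma^vee] (via the character isomorphism R(sigma) = Z[sigma^vee]):
   l-valued functions on characters, zero off sigma^vee.  A basis element
   delta_chi is the class of the irreducible (1-dim.) representation with
   character chi. *)
Definition Rel s (c : {ffun gT -> k} -> l) : Prop :=
  forall chi, ~ is_kchar s chi -> c chi = 0.

Definition rdelta chi : {ffun gT -> k} -> l := fun psi => if psi == chi then 1 else 0.
Definition rone s := rdelta (chi1 s).
Definition rmul s (c d : {ffun gT -> k} -> l) : {ffun gT -> k} -> l :=
  fun chi => \sum_(psi \in kchars s) c psi * d (cmul chi (cinv psi)).

Definition is_dsubgroup s (H : set {ffun gT -> k}) : Prop :=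
  [/\ H `<=` kchars s, H (chi1 s) & forall a b, H a -> H b -> H (cmul a (cinv b))].
Definition min_dsubgroups s : set (set {ffun gT -> k}) :=
  fun H => [/\ is_dsubgroup s H, H <> [set chi1 s]
    & forall H', is_dsubgroup s H' -> H' `<=` H -> H' = [set chi1 s] \/ H' = H].

(* the factor 1 - (1/|rho'|) sum_{h in rho'} h, image in l[sigma^vee] *)
Definition efac s (H : set {ffun gT -> k}) : {ffun gT -> k} -> l :=
  fun chi => rone s chi -
    (if chi \in H then ((#|` fset_set H |)%fset%:R)^-1 else 0).

Definition esig s : {ffun gT -> k} -> l :=
  \big[rmul s / rone s]_(H \in min_dsubgroups s) efac s H.

(* the map R(sigma)_l -> Map(sigma, l), [V] |-> eps o chi_V; Map(sigma,l) is
   identified with functions gT -> l vanishing outside sigma *)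
Definition Phi s (eps : k -> l) (c : {ffun gT -> k} -> l) : gT -> l :=
  fun x => if x \in s then \sum_(psi \in kchars s) c psi * eps (psi x) else 0.

Definition act_char (a : {perm gT}) chi : {ffun gT -> k} := [ffun x => chi ((a^-1)%g x)].
Definition act_R (a : {perm gT}) (c : {ffun gT -> k} -> l) : {ffun gT -> k} -> l :=
  fun chi => c (act_char (a^-1)%g chi).
Definition act_map (a : {perm gT}) (f : gT -> l) : gT -> l := fun x => f ((a^-1)%g x).

End RepRing.

From HB Require Import structures.
From mathcomp Require Import all_boot all_order all_algebra all_fingroup all_solvable.
From mathcomp Require Import finmap.
From mathcomp Require Import boolp classical_sets functions cardinality fsbigop.
Set Implicit Arguments. Unset Strict Implicit. Unset Printing Implicit Defensive.
Import Order.TTheory GRing.Theory.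
Local Open Scope classical_set_scope.
Local Open Scope ring_scope.

(* Write sigma = <[g]> with m := #[g], and let w be a primitive m-th root of unity of k.
   The characters of sigma are the chi j : g^e |-> w^(j e), j < m, and u := eps w is a
   primitive m-th root of unity of l, so on sigma the map Phi is the discrete Fourier
   transform c |-> (e |-> sum_j c (chi j) u^(j e)) of Z/m.  It turns the convolution
   product of R(sigma)_l into the pointwise product, and it is inverted by the usual
   formula since m is invertible in l.  For a subgroup H of sigma^vee, Phi (1 - avg_H)
   vanishes at x if H kills x and equals 1 otherwise, because a nontrivial character sums
   to 0 over H.  A generator of sigma is killed by no nontrivial character, whereas an
   element of order d < m is killed by chi d, hence by some minimal nontrivial subgroup;
   so Phi e_sigma is the indicator of gen(sigma).  Aut(sigma) permutes sigma^vee, and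
   reindexing the defining sum gives the equivariance. *)

Lemma dvdn_natr_neq0 (R : pzSemiRingType) m n :
  (m %| n)%N -> n%:R != 0 :> R -> m%:R != 0 :> R.
Proof. by move=> /dvdnP[q ->]; rewrite natrM; apply: contraNneq => ->; rewrite mulr0. Qed.

Lemma sum_periodic_shift (V : zmodType) N (F : nat -> V) :
  (forall t, F (t + N)%N = F t) -> forall s, \sum_(j < N) F (j + s)%N = \sum_(j < N) F j.
Proof.
move=> F_per; elim=> [|s IHs]; first by under eq_bigr do rewrite addn0.
rewrite -{}IHs; pose G j := F (j + s)%N.
have GN : G N = G 0%N by rewrite /G add0n addnC F_per.
have := erefl (\sum_(j < N.+1) G j).
rewrite {1}big_ord_recl big_ord_recr /= GN addrC => /addrI E.
transitivity (\sum_(j < N) G (bump 0 j)); last by rewrite E.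
by apply: eq_bigr => j _; rewrite /G /bump add1n addSn addnS.
Qed.

Lemma finite_subsets (T : choiceType) (A : set T) :
  finite_set A -> finite_set [set B | B `<=` A].
Proof.
move=> finA; pose F := fset_set A.
pose of_set (S : {set F}) : set T := [set val y | y in [set y | y \in S]].
apply: (sub_finite_set _ (finite_image of_set (@finite_finset _ setT))).
move=> B /= BA; exists [set y : F | val y \in B]%SET => //.
apply/seteqP; split=> [_ [y /= + <-] | x Bx]; first by rewrite inE => /set_mem.
have xF : x \in F by rewrite in_fset_set // inE; exact: BA.
by exists [` xF]%fset => //=; rewrite inE /= mem_set.
Qed.

Lemma exists_minimal_set (T : choiceType) (P : set T -> Prop) (A : set T) :
  finite_set A -> P A ->
  exists B, [/\ P B, B `<=` A & forall C, P C -> C `<=` B -> C = B].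
Proof.
have [n] := ubnP #|`fset_set A|; elim: n A => // n IHn A.
rewrite ltnS => An finA PA.
have [minA | ] := pselect (forall C, P C -> C `<=` A -> C = A); first by exists A; split.
move=> /existsNP[C /not_implyP[PC /not_implyP[CA neCA]]].
have finC := sub_finite_set CA finA.
have ltCA : (#|`fset_set C| < #|`fset_set A|)%N.
  apply: fproper_ltn_card; rewrite fproperEneq; apply/andP; split.
    by apply/eqP => /fset_set_inj CeA; apply: neCA; apply: CeA.
  by rewrite -fset_set_sub.
have [B [PB BC minB]] := IHn C (leq_trans ltCA An) finC PC.
by exists B; split => //; apply: subset_trans CA.
Qed.

Section RootsOfUnityMap.
Variables (k l : fieldType) (n : nat) (eps : k -> l).
Hypotheses (n_gt0 : (0 < n)%N)
  (eps_root : forall x, x ^+ n = 1 -> eps x ^+ n = 1)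
  (eps_mul : forall x y, x ^+ n = 1 -> y ^+ n = 1 -> eps (x * y) = eps x * eps y)
  (eps_inj : forall x y, x ^+ n = 1 -> y ^+ n = 1 -> eps x = eps y -> x = y).

Lemma eps1 : eps 1 = 1.
Proof.
have eps1_neq0 : eps 1 != 0.
  apply/eqP => eps1_0; move: (eps_root (expr1n k n)).
  by rewrite eps1_0 expr0n gtn_eqF // => /eqP; rewrite eq_sym oner_eq0.
by apply: (mulfI eps1_neq0); rewrite -eps_mul ?expr1n // !mulr1.
Qed.

Lemma eps_expr z : z ^+ n = 1 -> forall e, eps (z ^+ e) = eps z ^+ e.
Proof.
move=> zn; elim=> [|e IHe]; first by rewrite !expr0 eps1.
have zen : z ^+ e ^+ n = 1 by rewrite -exprM mulnC exprM zn expr1n.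
by rewrite !exprS eps_mul ?IHe.
Qed.

Lemma eps_prim_root m z :
  (m %| n)%N -> m.-primitive_root z -> m.-primitive_root (eps z).
Proof.
move=> m_dvd_n z_prim.
have zn : z ^+ n = 1 by apply/eqP; rewrite -(prim_order_dvd z_prim).
have eps_z_eq1 e : (eps z ^+ e == 1) = (m %| e)%N.
  rewrite (prim_order_dvd z_prim) -eps_expr // -eps1; apply/eqP/eqP => [|-> //].
  by apply: eps_inj; rewrite ?expr1n // -exprM mulnC exprM zn expr1n.
have /eqP eps_zm := eps_z_eq1 m; rewrite dvdnn in eps_zm.
have [m' m'_prim m'_dvd_m] := prim_order_exists (prim_order_gt0 z_prim) eps_zm.
suff -> : m = m' by [].
by apply/eqP; rewrite eqn_dvd m'_dvd_m andbT -eps_z_eq1 (prim_expr_order m'_prim).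
Qed.

End RootsOfUnityMap.

Section DiscreteFourier.
Variables (R : fieldType) (m : nat) (u : R).
Hypothesis u_prim : m.-primitive_root u.

Lemma sum_unity_root (z : R) : z ^+ m = 1 ->
  \sum_(j < m) z ^+ j = if z == 1 then m%:R else 0.
Proof.
move=> zm; have [-> | z_neq1] := eqVneq z 1.
  by under eq_bigr do rewrite expr1n; rewrite sumr_const card_ord.
apply/eqP; move: (subrX1 z m); rewrite zm subrr => /esym/eqP.
by rewrite mulf_eq0 subr_eq0 (negbTE z_neq1).
Qed.

Lemma sum_prim_root_div i j : (i < m)%N -> (j < m)%N ->
  \sum_(t < m) u ^+ (j * t) / u ^+ (i * t) = if j == i then m%:R else 0.
Proof.
move=> lt_im lt_jm; have ui_neq0 : u ^+ i != 0.
  by rewrite expf_neq0 // (prim_root_eq0 u_prim) -lt0n (prim_order_gt0 u_prim).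
have -> : (j == i) = (u ^+ j / u ^+ i == 1).
  rewrite -(inj_eq (mulIf ui_neq0)) divfK // mul1r (eq_prim_root_expr u_prim).
  by rewrite !modn_small.
rewrite -sum_unity_root; last first.
  by rewrite expr_div_n -!exprM !(mulnC _ m) !exprM (prim_expr_order u_prim) !expr1n divr1.
by apply: eq_bigr => t _; rewrite !exprM expr_div_n.
Qed.

Lemma expr_prim_addmul t e : u ^+ (t + m * e) = u ^+ t.
Proof. by rewrite exprD exprM (prim_expr_order u_prim) expr1n mulr1. Qed.

Definition dft (a : nat -> R) (e : nat) : R := \sum_(j < m) a j * u ^+ (j * e).

Definition idft (F : nat -> R) (i : nat) : R := m%:R^-1 * \sum_(e < m) F e / u ^+ (i * e).

Lemma dft_conv (a b : nat -> R) e : (forall t, b (t + m)%N = b t) ->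
  dft (fun j => \sum_(i < m) a i * b (j + (m - i))%N) e = dft a e * dft b e.
Proof.
move=> b_per; rewrite /dft mulr_suml; under eq_bigr do rewrite mulr_suml.
rewrite exchange_big /=; apply: eq_bigr => i _.
pose B t := b t * u ^+ (t * e).
have B_per t : B (t + m)%N = B t by rewrite /B b_per mulnDl expr_prim_addmul.
transitivity (a i * (u ^+ (i * e) * \sum_(j < m) B (j + (m - i))%N)).
  rewrite !mulr_sumr; apply: eq_bigr => j _; rewrite /B -mulrA; congr (_ * _).
  rewrite mulrCA; congr (_ * _).
  by rewrite -exprD -mulnDl addnCA subnKC ?(ltnW (ltn_ord i)) // mulnDl expr_prim_addmul.
by rewrite (sum_periodic_shift B_per) mulrA.
Qed.

Hypothesis m_neq0 : m%:R != 0 :> R.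

Lemma idft_dft a i : (i < m)%N -> idft (dft a) i = a i.
Proof.
move=> lt_im; rewrite /idft /dft; under eq_bigr do rewrite mulr_suml.
rewrite exchange_big /=.
under eq_bigr => j _ do under eq_bigr => e _ do rewrite -mulrA.
under eq_bigr => j _ do rewrite -mulr_sumr (sum_prim_root_div lt_im (ltn_ord j))
  (fun_if (GRing.mul (a j))) mulr0.
by rewrite -big_mkcond (big_ord1_eq _ (fun j => a j * m%:R)) lt_im mulrCA mulVf ?mulr1.
Qed.

Lemma dft_idft F e : (e < m)%N -> dft (idft F) e = F e.
Proof.
move=> lt_em; rewrite /dft /idft; under eq_bigr do rewrite -mulrA mulr_suml.
rewrite -mulr_sumr exchange_big /=.
under eq_bigr => f _ do under eq_bigr => j _ do rewrite mulrAC -mulrA (mulnC j) (mulnC j).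
under eq_bigr => f _ do rewrite -mulr_sumr (sum_prim_root_div (ltn_ord f) lt_em)
  eq_sym (fun_if (GRing.mul (F f))) mulr0.
by rewrite -big_mkcond (big_ord1_eq _ (fun j => F j * m%:R)) lt_em mulrCA mulVf ?mulr1.
Qed.

End DiscreteFourier.

Section Characters.
Variables (gT : finGroupType) (k : fieldType) (s : {group gT}).
Implicit Types (x y : gT) (chi psi : {ffun gT -> k}) (H : set {ffun gT -> k}).
Local Notation K := (@kchars gT k s).

Lemma kchar1 psi : K psi -> psi 1%g = 1.
Proof.
case=> psiM psi_neq0 _; apply: (mulfI (psi_neq0 _ (group1 s))).
by rewrite -psiM ?mulg1 ?mulr1.
Qed.

Lemma kcharX psi x i : K psi -> x \in s -> psi (x ^+ i)%g = psi x ^+ i.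
Proof.
move=> psi_char xs; elim: i => [|i IHi]; first by rewrite expg0 expr0 kchar1.
by case: psi_char => psiM _ _; rewrite expgS psiM ?groupX // IHi exprS.
Qed.

Lemma kchar_chi1 : K (chi1 k s).
Proof.
split=> [x y xs ys | x xs | x /negbTE xs]; rewrite !ffunE ?groupM ?xs ?ys //.
  by rewrite mulr1.
exact: oner_neq0.
Qed.

Lemma kchar_div chi psi : K chi -> K psi -> K (cmul chi (cinv psi)).
Proof.
case=> chiM chi_neq0 chi_out [psiM psi_neq0 _].
split=> [x y xs ys | x xs | x xs]; rewrite !ffunE.
- by rewrite chiM // psiM // invfM mulrACA.
- by rewrite mulf_neq0 ?invr_eq0 ?chi_neq0 ?psi_neq0.
- by rewrite chi_out ?mul0r.
Qed.

Lemma dsubgroup_mul H chi psi : is_dsubgroup s H -> H chi -> H psi -> H (cmul chi psi).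
Proof.
case=> HK H1 Hdiv Hchi Hpsi.
have Hpsi_inv : H (cinv psi).
  suff -> : cinv psi = cmul (chi1 k s) (cinv psi) by apply: Hdiv.
  apply/ffunP => x; rewrite !ffunE; case: ifPn => [_ | xNs]; first by rewrite mul1r.
  by case: (HK _ Hpsi) => _ _ ->; rewrite ?invr0 ?mul0r.
suff -> : cmul chi psi = cmul chi (cinv (cinv psi)) by apply: Hdiv.
by apply/ffunP => x; rewrite !ffunE invrK.
Qed.

Lemma dsubgroup_mul_bij H psi0 : is_dsubgroup s H -> H psi0 -> set_bij H H (cmul psi0).
Proof.
move=> Hsub Hpsi0; have [HK _ Hdiv] := Hsub; have [_ psi0_neq0 psi0_out] := HK _ Hpsi0.
have out0 psi y : H psi -> y \notin s -> psi y = 0 by move=> /HK[_ _]; apply.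
split=> [psi Hpsi | p q /set_mem Hp /set_mem Hq /ffunP pq | q Hq].
- exact: dsubgroup_mul Hsub Hpsi0 Hpsi.
- apply/ffunP => y; have := pq y; rewrite !ffunE.
  have [ys | yNs] := boolP (y \in s); first by apply: mulfI; exact: psi0_neq0.
  by rewrite !out0.
- exists (cmul q (cinv psi0)); first exact: Hdiv.
  apply/ffunP => y; rewrite !ffunE; have [ys | yNs] := boolP (y \in s).
    by rewrite mulrCA mulfV ?mulr1 ?psi0_neq0.
  by rewrite psi0_out ?mul0r ?out0.
Qed.

Lemma generator_kchar_eq1 x psi :
  generator s x -> K psi -> psi x = 1 -> psi = chi1 k s.
Proof.
move=> /eqP s_x psi_char psi_x; apply/ffunP => y; rewrite ffunE.
case: ifPn => [| yNs]; last by case: psi_char => _ _ ->.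
rewrite s_x => /cycleP[i ->].
by rewrite kcharX ?psi_x ?expr1n // s_x cycle_id.
Qed.

Lemma exists_min_dsubgroup H : finite_set H -> is_dsubgroup s H ->
  H <> [set chi1 k s] -> exists2 H0, min_dsubgroups s H0 & H0 `<=` H.
Proof.
move=> finH Hsub Hne.
have [H0 [[H0sub H0ne] H0H H0min]] := exists_minimal_set
  (P := fun H => is_dsubgroup s H /\ H <> [set chi1 k s]) finH (conj Hsub Hne).
exists H0 => //; split=> // H' H'sub H'H0.
by have [-> | H'ne] := pselect (H' = [set chi1 k s]); [left | right; apply: H0min].
Qed.

Lemma min_dsubgroup_separates x H : generator s x -> min_dsubgroups s H ->
  exists2 psi, H psi & psi x != 1.
Proof.
move=> gen_x [[HK H1 _] Hne _]; apply: contrapT => noSep; apply: Hne.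
apply/seteqP; split=> [psi Hpsi | _ -> //]; apply: generator_kchar_eq1 gen_x (HK _ Hpsi) _.
by apply: contrapT => /eqP psi_x; apply: noSep; exists psi.
Qed.

Lemma act_charK (a : {perm gT}) : cancel (@act_char gT k a) (act_char a^-1).
Proof. by move=> psi; apply/ffunP => x; rewrite !ffunE invgK permK. Qed.

Lemma act_charKV (a : {perm gT}) : cancel (@act_char gT k a^-1) (act_char a).
Proof. by move=> psi; apply/ffunP => x; rewrite !ffunE invgK permKV. Qed.

Lemma act_char_kchar (a : {perm gT}) psi : a \in Aut s -> K psi -> K (act_char a psi).
Proof.
move=> a_aut [psiM psi_neq0 psi_out]; have ai_aut : (a^-1)%g \in Aut s by rewrite groupV.
split=> [x y xs ys | x xs | x xNs]; rewrite !ffunE.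
- by rewrite (morphicP (Aut_morphic ai_aut)) // psiM ?Aut_closed.
- by rewrite psi_neq0 ?Aut_closed.
- by rewrite (out_Aut ai_aut xNs) psi_out.
Qed.

Lemma Phi_act (l : fieldType) (eps : k -> l) (a : {perm gT}) c : a \in Aut s ->
  Phi s eps (act_R a c) = act_map a (Phi s eps c).
Proof.
move=> a_aut; have ai_aut : (a^-1)%g \in Aut s by rewrite groupV.
apply: funext => x; rewrite /act_map /Phi.
have -> : ((a^-1)%g x \in s) = (x \in s).
  by apply/idP/idP => [/(Aut_closed a_aut) | /(Aut_closed ai_aut)]; rewrite ?permKV.
case: ifP => // xs.
have bij : set_bij K K (act_char a^-1).
  split=> [psi | | psi Kpsi]; first exact: act_char_kchar.
    exact: in2W (can_inj (act_charKV a)).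
  by exists (act_char a psi); [exact: act_char_kchar | rewrite act_charK].
rewrite [RHS](reindex_fsbig _ _ _ _ bij); apply: eq_fsbigr => psi _.
by rewrite /act_R ffunE invgK permKV.
Qed.

End Characters.

Section CyclicGroup.
Variables (gT : finGroupType) (k : fieldType) (sigma : {group gT}) (g : gT) (w : k).
Hypotheses (sigma_g : (sigma : {set gT}) = <[g]>%g) (w_prim : #[g]%g.-primitive_root w).
Local Notation m := #[g]%g.
Local Notation K := (@kchars gT k sigma).
Implicit Types (x : gT) (psi : {ffun gT -> k}) (H : set {ffun gT -> k}).

Lemma mem_expg e : (g ^+ e)%g \in sigma.
Proof. by rewrite sigma_g mem_cycle. Qed.

Lemma generator_mem x : generator sigma x -> x \in sigma.
Proof. by rewrite sigma_g; exact: cycle_generator. Qed.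

Definition dlog x : nat := index x (mkseq (fun i => g ^+ i)%g m).

Lemma dlog_mem x : x \in sigma -> x \in mkseq (fun i => g ^+ i)%g m.
Proof. by rewrite sigma_g => /cyclePmin[i lt_im ->]; apply/mapP; exists i; rewrite ?mem_iota. Qed.

Lemma dlog_lt x : x \in sigma -> (dlog x < m)%N.
Proof. by move/dlog_mem; rewrite -index_mem size_mkseq. Qed.

Lemma dlogK x : x \in sigma -> (g ^+ dlog x)%g = x.
Proof. by move=> xs; rewrite -{2}(nth_index 1%g (dlog_mem xs)) nth_mkseq ?dlog_lt. Qed.

Lemma eq_on_cycle (T : Type) (f1 f2 : gT -> T) :
  (forall x, x \notin sigma -> f1 x = f2 x) ->
  (forall e, (e < m)%N -> f1 (g ^+ e)%g = f2 (g ^+ e)%g) -> f1 =1 f2.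
Proof.
move=> f_out f_exp x; have [xs | /f_out //] := boolP (x \in sigma).
by rewrite -(dlogK xs) f_exp ?dlog_lt.
Qed.

Definition chi (j : nat) : {ffun gT -> k} :=
  [ffun x => if x \in sigma then w ^+ (j * dlog x) else 0].

Lemma chi_expg j e : chi j (g ^+ e)%g = w ^+ (j * e).
Proof.
rewrite ffunE mem_expg; apply/eqP; rewrite (eq_prim_root_expr w_prim).
have /eqP := dlogK (mem_expg e); rewrite eq_expg_mod_order => /eqP dlog_e.
by rewrite -modnMmr dlog_e modnMmr.
Qed.

Lemma chi_mod j : chi (j %% m) = chi j.
Proof.
apply/ffunP => x; rewrite !ffunE; case: ifP => // _.
by apply/eqP; rewrite (eq_prim_root_expr w_prim) modnMml.
Qed.

Lemma kchar_chi j : K (chi j).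
Proof.
have w_neq0 : w != 0 by rewrite (prim_root_eq0 w_prim) -lt0n order_gt0.
split=> [x y xs ys | x xs | x /negbTE xNs]; last by rewrite ffunE xNs.
  by rewrite -(dlogK xs) -(dlogK ys) -expgD !chi_expg mulnDr exprD.
by rewrite ffunE xs expf_neq0.
Qed.

Lemma kcharP psi : K psi -> exists2 j, (j < m)%N & psi = chi j.
Proof.
move=> psi_char; have gs : g \in sigma by rewrite sigma_g cycle_id.
have /(prim_rootP w_prim)[j psi_g] : psi g ^+ m = 1.
  by rewrite -(kcharX m psi_char gs) expg_order (kchar1 psi_char).
exists j => //; apply/ffunP; apply: eq_on_cycle => [x xNs | e _].
  by case: psi_char => _ _ ->; rewrite // ffunE (negbTE xNs).
by rewrite (kcharX e psi_char gs) psi_g chi_expg -exprM.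
Qed.

Lemma eq_chi i j : (i < m)%N -> (j < m)%N -> (chi i == chi j) = (i == j).
Proof.
move=> lt_im lt_jm; apply/eqP/eqP => [chi_ij | -> //].
have := congr1 (fun f : {ffun gT -> k} => f (g ^+ 1)%g) chi_ij.
rewrite /= !chi_expg !muln1 => /eqP; rewrite (eq_prim_root_expr w_prim).
by rewrite !modn_small // => /eqP.
Qed.

Lemma chi0 : chi1 k sigma = chi 0.
Proof. by apply/ffunP => x; rewrite !ffunE. Qed.

Lemma chiD i j : cmul (chi i) (chi j) = chi (i + j).
Proof.
apply/ffunP => x; rewrite !ffunE; case: ifP => _; last by rewrite mulr0.
by rewrite -exprD mulnDl.
Qed.

Lemma chiB i j : (i <= m)%N -> cmul (chi j) (cinv (chi i)) = chi (j + (m - i)).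
Proof.
move=> le_im; apply/ffunP => x; rewrite !ffunE; case: ifP => _; last by rewrite mul0r.
have wi_neq0 : w ^+ (i * dlog x) != 0.
  by rewrite expf_neq0 // (prim_root_eq0 w_prim) -lt0n order_gt0.
apply: (mulIf wi_neq0); rewrite mulrVK ?unitfE // -exprD -mulnDl -addnA subnK //.
by rewrite mulnDl (expr_prim_addmul w_prim).
Qed.

Lemma kcharsE : K = chi @` `I_m.
Proof.
apply/seteqP; split=> [psi /kcharP[j lt_jm ->] | _ [j _ <-]]; last exact: kchar_chi.
by exists j.
Qed.

Lemma finite_kchars : finite_set K.
Proof. by rewrite kcharsE; apply/finite_image/finite_II. Qed.

Lemma big_kchars (R : Type) (idx : R) (op : Monoid.com_law idx) (F : {ffun gT -> k} -> R) :
  \big[op/idx]_(psi \in K) F psi = \big[op/idx]_(j < m) F (chi j).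
Proof.
rewrite kcharsE fsbig_image -?fsbig_ord // => i j /set_mem lt_im /set_mem lt_jm /eqP.
by rewrite eq_chi // => /eqP.
Qed.

Lemma finite_min_dsubgroups : finite_set (@min_dsubgroups gT k sigma).
Proof.
apply: sub_finite_set (finite_subsets finite_kchars).
by move=> H [[HK _ _] _ _].
Qed.

Lemma card_dsubgroup H : H `<=` K ->
  #|`fset_set H| = #|[set j : 'I_m | chi j \in H]%SET|.
Proof.
move=> HK; rewrite card_fset_sum1 -fsbig_finite; last exact: sub_finite_set HK finite_kchars.
rewrite (eq_fsbigr (fun psi => if psi \in H then 1 else 0)%N); last by move=> psi ->.
rewrite (fsbig_widen H K) //; last by move=> psi [_ Hpsi] /=; rewrite memNset.
by rewrite big_kchars -sum1_card [RHS]big_mkcond; apply: eq_bigr => j _; rewrite inE.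
Qed.

Lemma card_dsubgroup_dvdn H : is_dsubgroup sigma H -> (#|`fset_set H| %| m)%N.
Proof.
move=> Hsub; have [HK H1 _] := Hsub; rewrite card_dsubgroup //.
(* j |-> g ^+ j maps the indices of the characters in H onto a subgroup of sigma. *)
set J := [set j : 'I_m | _]%SET; pose T := [set (g ^+ val j)%g | j in J]%SET.
have T_group : group_set T.
  apply/group_setP; split.
    by apply/imsetP; exists (Ordinal (order_gt0 g)); rewrite // inE -chi0 mem_set.
  move=> _ _ /imsetP[i Ji ->] /imsetP[j Jj ->].
  apply/imsetP; exists (Ordinal (ltn_pmod (i + j) (order_gt0 g))).
    move: Ji Jj; rewrite !inE /= chi_mod -chiD => Hi Hj.
    exact: (dsubgroup_mul Hsub Hi Hj).
  by rewrite /= expg_mod_order expgD.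
have -> : #|J| = #|T|.
  apply/esym/card_in_imset => i j _ _ /eqP; rewrite eq_expg_mod_order.
  by rewrite !modn_small ?ltn_ord // => /eqP/val_inj.
have Tsub : T \subset sigma by apply/fintype.subsetP => _ /imsetP[j _ ->]; exact: mem_expg.
by rewrite /order -sigma_g; exact: (cardSg (G := sigma) (H := Group T_group)).
Qed.

Lemma exists_min_dsubgroup_ann x : x \in sigma -> ~~ generator sigma x ->
  exists2 H0, @min_dsubgroups gT k sigma H0 & forall psi, H0 psi -> psi x = 1.
Proof.
move=> xs ngen_x; pose Ann := [set psi | K psi /\ psi x = 1].
have Ann_sub : is_dsubgroup sigma Ann.
  split=> [psi [] // | | a b [Ka ax] [Kb bx]].
    by split; [exact: kchar_chi1 | rewrite ffunE xs].
  by split; [exact: kchar_div | rewrite !ffunE ax bx invr1 mulr1].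
have lt_xm : (#[x]%g < m)%N.
  have xsub : (<[x]> \subset sigma)%g by rewrite cycle_subG.
  rewrite /order -sigma_g ltn_neqAle subset_leq_card // andbT.
  apply: contra ngen_x => /eqP card_eq.
  by rewrite /generator eq_sym eqEcard xsub card_eq leqnn.
have Ann_ne : Ann <> [set chi1 k sigma].
  move=> Ann1; have : Ann (chi #[x]%g).
    split; first exact: kchar_chi.
    rewrite -(dlogK xs) chi_expg; apply/eqP; rewrite -(prim_order_dvd w_prim).
    by rewrite mulnC order_dvdn expgM dlogK // expg_order.
  rewrite Ann1 chi0 => /eqP; rewrite eq_chi ?order_gt0 // => /eqP x0.
  by move: (order_gt0 x); rewrite x0.
have finAnn : finite_set Ann by apply: sub_finite_set finite_kchars => psi [].
have [H0 H0min H0Ann] := exists_min_dsubgroup finAnn Ann_sub Ann_ne.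
by exists H0 => // psi /H0Ann[].
Qed.

Section CharacterMap.
Variables (l : fieldType) (eps : k -> l).
Hypotheses (u_prim : m.-primitive_root (eps w))
  (eps_expr : forall e, eps (w ^+ e) = eps w ^+ e) (m_neq0 : m%:R != 0 :> l).
Local Notation u := (eps w).
Implicit Types (c d : {ffun gT -> k} -> l).

Lemma eps_w1 : eps 1 = 1.
Proof. by have := eps_expr 0; rewrite !expr0. Qed.

Lemma kchar_expw psi x : K psi -> x \in sigma -> exists e, psi x = w ^+ e.
Proof. by case/kcharP=> j _ -> xs; exists (j * dlog x)%N; rewrite ffunE xs. Qed.

Lemma eps_kcharM psi psi' x : K psi -> K psi' -> x \in sigma ->
  eps (psi x * psi' x) = eps (psi x) * eps (psi' x).
Proof.
move=> psi_char psi'_char xs.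
have [[e ->] [e' ->]] := (kchar_expw psi_char xs, kchar_expw psi'_char xs).
by rewrite -exprD !eps_expr exprD.
Qed.

Lemma eps_kchar_eq1 psi x : K psi -> x \in sigma -> (eps (psi x) == 1) = (psi x == 1).
Proof.
move=> psi_char xs; have [e ->] := kchar_expw psi_char xs.
by rewrite eps_expr -(prim_order_dvd u_prim) (prim_order_dvd w_prim).
Qed.

Lemma Phi_out c x : x \notin sigma -> Phi sigma eps c x = 0.
Proof. by rewrite /Phi => /negbTE ->. Qed.

Lemma Phi_expg c e : Phi sigma eps c (g ^+ e)%g = dft m u (fun j => c (chi j)) e.
Proof. by rewrite /Phi mem_expg big_kchars; apply: eq_bigr => j _; rewrite chi_expg eps_expr. Qed.

Lemma Phi_rone_in x : x \in sigma -> Phi sigma eps (rone l sigma) x = 1.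
Proof.
move=> xs; rewrite /Phi xs big_kchars /rone /rdelta chi0.
under eq_bigr => j _ do rewrite eq_chi ?order_gt0 // (fun_if (GRing.mul^~ _)) mul1r mul0r.
by rewrite -big_mkcond (big_ord1_eq _ (fun j => eps (chi j x))) order_gt0 ffunE xs expr0 eps_w1.
Qed.

Lemma Phi_rone : Phi sigma eps (rone l sigma) = (fun x => if x \in sigma then 1 else 0).
Proof. by apply: funext => x; case: ifPn => [/Phi_rone_in | /Phi_out]. Qed.

Lemma Phi_add c d :
  Phi sigma eps (fun chi => c chi + d chi) = (fun x => Phi sigma eps c x + Phi sigma eps d x).
Proof.
apply: funext => x; have [xs | xNs] := boolP (x \in sigma); last by rewrite !Phi_out ?addr0.
by rewrite /Phi xs !big_kchars -big_split; apply: eq_bigr => j _; rewrite mulrDl.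
Qed.

Lemma Phi_scale (a : l) c :
  Phi sigma eps (fun chi => a * c chi) = (fun x => a * Phi sigma eps c x).
Proof.
apply: funext => x; have [xs | xNs] := boolP (x \in sigma); last by rewrite !Phi_out ?mulr0.
by rewrite /Phi xs !big_kchars mulr_sumr; apply: eq_bigr => j _; rewrite mulrA.
Qed.

Lemma rmul_chi c d j :
  rmul sigma c d (chi j) = \sum_(i < m) c (chi i) * d (chi (j + (m - i))).
Proof. by rewrite /rmul big_kchars; apply: eq_bigr => i _; rewrite chiB // ltnW. Qed.

Lemma Phi_mul c d :
  Phi sigma eps (rmul sigma c d) = (fun x => Phi sigma eps c x * Phi sigma eps d x).
Proof.
apply: funext; apply: eq_on_cycle => [x xNs | e _]; first by rewrite !Phi_out ?mulr0.
rewrite !Phi_expg -dft_conv //; last by move=> t; rewrite -chi_mod modnDr chi_mod.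
by apply: eq_bigr => j _; rewrite rmul_chi.
Qed.

Lemma Phi_inj c d : Rel sigma c -> Rel sigma d ->
  Phi sigma eps c = Phi sigma eps d -> c = d.
Proof.
move=> Rc Rd Phi_cd; apply: funext => psi.
have [/kcharP[j lt_jm ->] | Npsi] := pselect (K psi); last by rewrite Rc ?Rd.
have Phi_dft c' : dft m u (fun j => c' (chi j)) = (fun e => Phi sigma eps c' (g ^+ e)%g).
  by apply: funext => e; rewrite Phi_expg.
have := idft_dft u_prim m_neq0 (fun j => c (chi j)) lt_jm.
have := idft_dft u_prim m_neq0 (fun j => d (chi j)) lt_jm.
by rewrite /= !Phi_dft Phi_cd => -> ->.
Qed.

Lemma Phi_surj f : (forall x, x \notin sigma -> f x = 0) ->
  exists2 c, Rel sigma c & Phi sigma eps c = f.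
Proof.
move=> f_out; pose a := idft m u (fun e => f (g ^+ e)%g).
pose c psi := if [pick j : 'I_m | chi j == psi] is Some j then a j else 0.
have c_chi j : (j < m)%N -> c (chi j) = a j.
  move=> lt_jm; rewrite /c; case: pickP => [i | /(_ (Ordinal lt_jm))]; last by rewrite eqxx.
  by rewrite eq_chi // => /eqP ->.
exists c => [psi Npsi | ].
  by rewrite /c; case: pickP => // j /eqP chi_j; case: Npsi; rewrite -chi_j; exact: kchar_chi.
apply: funext; apply: eq_on_cycle => [x xNs | e lt_em]; first by rewrite Phi_out ?f_out.
rewrite Phi_expg; transitivity (dft m u a e); last exact: dft_idft.
by apply: eq_bigr => j _; rewrite c_chi.
Qed.

Lemma sum_dsubgroup_ann H x : H `<=` K -> (forall psi, H psi -> psi x = 1) ->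
  \sum_(psi \in H) eps (psi x) = #|`fset_set H|%:R.
Proof.
move=> HK H_x; rewrite (eq_fsbigr (fun=> 1)); last by move=> psi /set_mem/H_x ->; exact: eps_w1.
rewrite fsbig_finite; last exact: sub_finite_set HK finite_kchars.
by rewrite card_fset_sum1 natr_sum.
Qed.

Lemma sum_dsubgroup_eq0 H x psi0 : is_dsubgroup sigma H -> x \in sigma ->
  H psi0 -> psi0 x != 1 -> \sum_(psi \in H) eps (psi x) = 0.
Proof.
move=> Hsub xs Hpsi0 psi0_x; have [HK _ _] := Hsub.
have S_eq : \sum_(psi \in H) eps (psi x) = eps (psi0 x) * \sum_(psi \in H) eps (psi x).
  rewrite {1}(reindex_fsbig _ _ _ _ (dsubgroup_mul_bij Hsub Hpsi0)) mulr_fsumr.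
  apply: eq_fsbigr => psi /set_mem Hpsi.
  by rewrite ffunE (eps_kcharM (HK _ Hpsi0) (HK _ Hpsi) xs).
apply/eqP; move/eqP: S_eq; rewrite -subr_eq0 -{1}[\sum_(psi \in H) _]mul1r -mulrBl mulf_eq0.
by rewrite subr_eq0 eq_sym (eps_kchar_eq1 (HK _ Hpsi0) xs) (negbTE psi0_x).
Qed.

Lemma Phi_efac H x : is_dsubgroup sigma H -> x \in sigma ->
  Phi sigma eps (efac l sigma H) x =
  1 - (#|`fset_set H|%:R)^-1 * \sum_(psi \in H) eps (psi x).
Proof.
move=> [HK _ _] xs.
rewrite (eq_fsbigr (fun psi => if psi \in H then eps (psi x) else 0)); last by move=> psi ->.
rewrite (fsbig_widen H K) //; last by move=> psi [_ Hpsi] /=; rewrite memNset.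
rewrite -{1}(Phi_rone_in xs) /Phi xs !big_kchars mulr_sumr -sumrB.
apply: eq_bigr => j _; rewrite /efac mulrBl.
by case: ifP; rewrite ?mulr0 ?mul0r.
Qed.

Lemma card_dsubgroup_neq0 H : is_dsubgroup sigma H -> #|`fset_set H|%:R != 0 :> l.
Proof. by move=> Hsub; apply: dvdn_natr_neq0 (card_dsubgroup_dvdn Hsub) m_neq0. Qed.

Lemma Phi_big_rmul (r : seq (set {ffun gT -> k})) F x : x \in sigma ->
  Phi sigma eps (\big[rmul sigma/rone l sigma]_(H <- r) F H) x =
  \prod_(H <- r) Phi sigma eps (F H) x.
Proof.
move=> xs; elim: r => [|H r IHr]; first by rewrite !big_nil Phi_rone_in.
by rewrite !big_cons Phi_mul IHr.
Qed.

Lemma Phi_esig :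
  Phi sigma eps (esig l sigma) = (fun x => if generator sigma x then 1 else 0).
Proof.
apply: funext => x; have [xs | xNs] := boolP (x \in sigma); last first.
  by rewrite Phi_out //; case: ifPn => // /generator_mem; rewrite (negbTE xNs).
have supp_fin : finite_set (@min_dsubgroups gT k sigma `&`
    efac l sigma @^-1` [set~ rone l sigma]).
  exact: sub_finite_set (@subIsetl _ _ _) finite_min_dsubgroups.
rewrite /esig Phi_big_rmul //; case: ifPn => [gen_x | ngen_x].
  apply: big1_seq => H /andP[_]; rewrite in_finite_support // => /set_mem[Hmin _].
  have [psi Hpsi psi_x] := min_dsubgroup_separates gen_x Hmin.
  have [Hsub _ _] := Hmin.
  by rewrite Phi_efac // (sum_dsubgroup_eq0 Hsub xs Hpsi psi_x) mulr0 subr0.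
have [H0 H0min H0_x] := exists_min_dsubgroup_ann xs ngen_x.
have [H0sub _ _] := H0min; have [H0K _ _] := H0sub.
have Phi_H0 : Phi sigma eps (efac l sigma H0) x = 0.
  by rewrite Phi_efac // sum_dsubgroup_ann // mulVf ?subrr // card_dsubgroup_neq0.
apply/eqP; rewrite prodf_seq_eq0; apply/hasP; exists H0; last by rewrite /= Phi_H0.
rewrite in_finite_support //; apply: mem_set; split => //= efac_H0.
by move: Phi_H0; rewrite efac_H0 Phi_rone_in // => /eqP; rewrite oner_eq0.
Qed.

Lemma Phi_esig_image f :
  (exists2 c, Rel sigma c & Phi sigma eps (rmul sigma (esig l sigma) c) = f) <->
  (forall x, ~~ generator sigma x -> f x = 0).
Proof.
split=> [[c _ <-] x ngen_x | f_gen]; first by rewrite Phi_mul Phi_esig /= (negbTE ngen_x) mul0r.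
have [c Rc Phi_c] : exists2 c, Rel sigma c & Phi sigma eps c = f.
  by apply: Phi_surj => x xNs; apply/f_gen/(contra (@generator_mem x)).
exists c => //; apply: funext => x; rewrite Phi_mul Phi_esig Phi_c /=.
by case: ifPn => [_ | /f_gen ->]; rewrite ?mul1r ?mul0r.
Qed.

End CharacterMap.

End CyclicGroup.

Theorem proposition4p6 (gT : finGroupType) (G sigma : {group gT})
    (k l : fieldType) (eps : k -> l) :
  (#|G|%:R != 0 :> k) -> (exists z : k, #|G|.-primitive_root z) ->
  (#|G|%:R != 0 :> l) -> (exists z : l, #|G|.-primitive_root z) ->
  (* eps : mu_n(k) -> mu_n(l) is a group isomorphism *)
  (forall x : k, x ^+ #|G| = 1 -> eps x ^+ #|G| = 1) ->
  (forall x y : k, x ^+ #|G| = 1 -> y ^+ #|G| = 1 -> eps (x * y) = eps x * eps y) ->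
  (forall x y : k, x ^+ #|G| = 1 -> y ^+ #|G| = 1 -> eps x = eps y -> x = y) ->
  (forall z : l, z ^+ #|G| = 1 -> exists2 x : k, x ^+ #|G| = 1 & eps x = z) ->
  sigma \subset G -> cyclic sigma ->
  (* Phi : R(sigma)_l -> Map(sigma,l) is an l-algebra homomorphism ... *)
  (Phi sigma eps (rone l sigma) = (fun x => if x \in sigma then 1 else 0)
   /\ (forall c d, Rel sigma c -> Rel sigma d ->
         Phi sigma eps (fun chi => c chi + d chi)
         = (fun x => Phi sigma eps c x + Phi sigma eps d x))
   /\ (forall (a : l) c, Rel sigma c ->
         Phi sigma eps (fun chi => a * c chi) = (fun x => a * Phi sigma eps c x))
   /\ (forall c d, Rel sigma c -> Rel sigma d ->
         Phi sigma eps (rmul sigma c d)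
         = (fun x => Phi sigma eps c x * Phi sigma eps d x))
   (* ... which is bijective *)
   /\ (forall c d, Rel sigma c -> Rel sigma d -> Phi sigma eps c = Phi sigma eps d -> c = d)
   /\ (forall f : gT -> l, (forall x, x \notin sigma -> f x = 0) ->
         exists2 c, Rel sigma c & Phi sigma eps c = f))
  (* restriction: e_sigma R(sigma)_l ~= Map(gen(sigma), l) as l-algebras *)
  /\ (Phi sigma eps (esig l sigma) = (fun x => if generator sigma x then 1 else 0)
   /\ (forall f : gT -> l,
         (exists2 c, Rel sigma c & Phi sigma eps (rmul sigma (esig l sigma) c) = f)
         <-> (forall x, ~~ generator sigma x -> f x = 0)))
  (* compatibility with Aut(sigma) *)
  /\ (forall (a : {perm gT}) c, a \in Aut sigma -> Rel sigma c ->
        Phi sigma eps (act_R a c) = act_map a (Phi sigma eps c)).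
Proof.
move=> _ [z z_prim] n_neq0 _ eps_root eps_mul eps_inj _ sigmaG /cyclicP[g sigma_g].
have m_dvd_n : (#[g]%g %| #|G|)%N by rewrite /order -sigma_g cardSg.
have w_prim := dvdn_prim_root z_prim m_dvd_n; set w := z ^+ _ in w_prim.
have w_n : w ^+ #|G| = 1 by apply/eqP; rewrite -(prim_order_dvd w_prim).
have n_gt0 := cardG_gt0 G.
have u_prim := eps_prim_root n_gt0 eps_root eps_mul eps_inj m_dvd_n w_prim.
have eps_w := eps_expr n_gt0 eps_root eps_mul w_n.
have m_neq0 := dvdn_natr_neq0 m_dvd_n n_neq0.
split; last split.
- split; first exact: (Phi_rone sigma_g w_prim eps_w).
  split; first by move=> c d _ _; exact: (Phi_add sigma_g w_prim).
  split; first by move=> a c _; exact: (Phi_scale sigma_g w_prim).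
  split; first by move=> c d _ _; exact: (Phi_mul sigma_g w_prim u_prim eps_w).
  split; first exact: (Phi_inj sigma_g w_prim u_prim eps_w m_neq0).
  exact: (Phi_surj sigma_g w_prim u_prim eps_w m_neq0).
- split; first exact: (Phi_esig sigma_g w_prim u_prim eps_w m_neq0).
  exact: (Phi_esig_image sigma_g w_prim u_prim eps_w m_neq0).
- by move=> a c a_aut _; exact: Phi_act.
Qed.
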